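(* Let $a,b>0$, $D=[0,a]\times[0,b]$, and let $f:D\to\mathbb{R}$ be a $C^3$ function. Let $p\in\operatorname{int}D$ be a local minimum of $f$ at which the Hessian of $f$ is positive definite. Then there exist a neighborhood $U$ of $p$ and a number $r>0$ such that for every sufficiently large $n$ for which $D_n$ is nondegenerate, there is exactly one grid vertex $p_{i,j}$ of $D_n$ in $U$ which is minimal within its grid circle $C_r(p_{i,j})$.
   Context: For $n\ge1$, $D_n$ denotes the division of $D$ into $n\times n$ congruent rectangles; its grid vertices are the points $p_{i,j}=\left(\frac{i}{n}a,\frac{j}{n}b\right)$, $0\le i,j\le n$. $D_n$ is called nondegenerate if $f(p)\neq f(p')$ for any two distinct grid vertices $p\neq p'$ of $D_n$. The grid circle of centre $p_{i,j}$ and radius $r$ is $C_r(p_{i,j})=\{p_{l,m}: 0\le l,m\le n,\ \max\{|l-i|,|m-j|\}\le r\}$. A grid vertex $p_{i,j}$ is minimal (resp. maximal) within $C_r(p_{i,j})$ if $f(p_{i,j})\le f(q)$ (resp. $f(p_{i,j})\ge f(q)$) for every $q\in C_r(p_{i,j})$. *)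

From Stdlib Require Import Reals List.
Import ListNotations.
Open Scope R_scope.

Definition inD (a b x y : R) : Prop := 0 <= x <= a /\ 0 <= y <= b.
Definition inIntD (a b x y : R) : Prop := 0 < x < a /\ 0 < y < b.

(* Partial derivative directions: false = d/dx, true = d/dy. *)
Definition has_partial (d : bool) (g h : R -> R -> R) (x y : R) : Prop :=
  if d then derivable_pt_lim (fun t => g x t) y (h x y)
  else derivable_pt_lim (fun t => g t y) x (h x y).

Definition cont_on_D (a b : R) (g : R -> R -> R) : Prop :=
  forall x y, inD a b x y -> forall eps, 0 < eps -> exists delta, 0 < delta /\
    forall x' y', inD a b x' y' -> Rabs (x' - x) < delta -> Rabs (y' - y) < delta ->
      Rabs (g x' y' - g x y) < eps.

(* F l is the iterated partial derivative of f along the word l, with the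
   head of l being the LAST derivative taken: F (d :: l) = d/d(d) (F l).
   f is C^3 on the closed rectangle D: all partial derivatives of order <= 3
   exist on int D and each extends continuously to D (f itself being
   continuous on D). *)
Definition C3_on_D_with (a b : R) (f : R -> R -> R) (F : list bool -> R -> R -> R) : Prop :=
  F [] = f /\
  cont_on_D a b f /\
  (forall l d, (length l < 3)%nat ->
     forall x y, inIntD a b x y -> has_partial d (F l) (F (d :: l)) x y) /\
  (forall l, (length l <= 3)%nat ->
     exists G, cont_on_D a b G /\ forall x y, inIntD a b x y -> G x y = F l x y).

Definition hessian_pos_def (F : list bool -> R -> R -> R) (x y : R) : Prop :=
  forall u v, (u, v) <> (0, 0) ->
    0 < u * u * F [false; false] x y + u * v * F [true; false] x y
        + v * u * F [false; true] x y + v * v * F [true; true] x y.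

Definition local_min_on_D (a b : R) (f : R -> R -> R) (x y : R) : Prop :=
  exists delta, 0 < delta /\ forall x' y', inD a b x' y' ->
    Rabs (x' - x) < delta -> Rabs (y' - y) < delta -> f x y <= f x' y'.

Definition gx (a : R) (n i : nat) : R := INR i / INR n * a.
Definition gy (b : R) (n j : nat) : R := INR j / INR n * b.

Definition nondegenerate (a b : R) (f : R -> R -> R) (n : nat) : Prop :=
  forall i j l m, (i <= n)%nat -> (j <= n)%nat -> (l <= n)%nat -> (m <= n)%nat ->
    (i, j) <> (l, m) -> f (gx a n i) (gy b n j) <> f (gx a n l) (gy b n m).

Definition in_grid_circle (n : nat) (r : R) (i j l m : nat) : Prop :=
  (l <= n)%nat /\ (m <= n)%nat /\
  Rmax (Rabs (INR l - INR i)) (Rabs (INR m - INR j)) <= r.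

Definition minimal_in_circle (a b : R) (f : R -> R -> R) (n : nat) (r : R) (i j : nat) : Prop :=
  forall l m, in_grid_circle n r i j l m ->
    f (gx a n i) (gy b n j) <= f (gx a n l) (gy b n m).

Definition is_nbhd (U : R -> R -> Prop) (x y : R) : Prop :=
  exists eps, 0 < eps /\ forall x' y', Rabs (x' - x) < eps -> Rabs (y' - y) < eps -> U x' y'.

From Stdlib Require Import Reals List Lra Lia Psatz Classical ZArith.
From Coquelicot Require Import Coquelicot.
Import ListNotations.
Open Scope R_scope.

(** Near p the Hessian of f is uniformly positive definite, so on a small square window
    around p Taylor's formula traps f between two quadratics: for points x, x + u of the
    window, f(x + u) - f(x) - grad f(x).u lies between (mu/2)|u|^2 and M|u|^2, and
    grad f(p) = 0.  The grid vertex m minimising f over the window is then at distance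
    O(1/n) from p, hence minimal in its grid circle once r exceeds a constant.  Conversely,
    let q be another vertex near p that is minimal in C_r(q); nondegeneracy gives
    f(m) < f(q), so m lies outside C_r(q).  Round the point of the segment from q to m at
    index distance rho from q to a grid vertex k in C_r(q).  The lower Taylor bound makes
    the slope of f from q towards m at most -(mu/2)|m - q|^2, so moving that far gains
    about rho |i - i0| / n^2, while rounding costs about |i - i0| / n^2 times a constant
    independent of rho (the gradient at q is O(|q - p|)); for rho large, f(k) < f(q). *)

(** * Second-order Taylor bounds in one variable *)

Lemma nondecreasing_of_deriv_nonneg (g g' : R -> R) s t :
  s <= t -> (forall x, s <= x <= t -> derivable_pt_lim g x (g' x)) ->
  (forall x, s <= x <= t -> 0 <= g' x) -> g s <= g t.
Proof.
  intros Hst Hd Hpos. destruct (Req_dec s t) as [->|Hne]; [lra|].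
  destruct (MVT_cor2 g g' s t) as [c [Hc Hcst]]; [lra|auto|].
  assert (0 <= g' c) by (apply Hpos; lra). nra.
Qed.

Lemma taylor2_unit_lower (g g1 g2 : R -> R) c :
  (forall t, 0 <= t <= 1 -> derivable_pt_lim g t (g1 t)) ->
  (forall t, 0 <= t <= 1 -> derivable_pt_lim g1 t (g2 t)) ->
  (forall t, 0 <= t <= 1 -> c <= g2 t) ->
  g 0 + g1 0 + c / 2 <= g 1.
Proof.
  intros Hg Hg1 Hc.
  assert (Hslope : forall t, 0 <= t <= 1 -> g1 0 + c * t <= g1 t).
  { intros t Ht.
    enough (g1 0 - c * 0 <= g1 t - c * t) by lra.
    apply (nondecreasing_of_deriv_nonneg (fun x => g1 x - c * x) (fun x => g2 x - c)); [lra| |].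
    - intros x Hx. replace (g2 x - c) with (g2 x - c * 1) by ring.
      apply (derivable_pt_lim_minus g1 (fun x => c * x)); [apply Hg1; lra|].
      apply (derivable_pt_lim_scal id c x 1), derivable_pt_lim_id.
    - intros x Hx. specialize (Hc x ltac:(lra)). lra. }
  enough (g 0 - g1 0 * 0 - c / 2 * (0 * 0) <= g 1 - g1 0 * 1 - c / 2 * (1 * 1)) by lra.
  apply (nondecreasing_of_deriv_nonneg (fun x => g x - g1 0 * x - c / 2 * (x * x))
           (fun x => g1 x - g1 0 - c * x)); [lra| |].
  - intros x Hx. replace (g1 x - g1 0 - c * x) with (g1 x - g1 0 * 1 - c / 2 * (1 * x + x * 1))
      by field.
    apply (derivable_pt_lim_minus (fun x => g x - g1 0 * x) (fun x => c / 2 * (x * x))).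
    + apply (derivable_pt_lim_minus g (fun x => g1 0 * x)); [apply Hg; lra|].
      apply (derivable_pt_lim_scal id), derivable_pt_lim_id.
    + apply (derivable_pt_lim_scal (fun x => x * x)).
      apply (derivable_pt_lim_mult id id); apply derivable_pt_lim_id.
  - intros x Hx. specialize (Hslope x Hx). lra.
Qed.

Lemma taylor2_unit_upper (g g1 g2 : R -> R) c :
  (forall t, 0 <= t <= 1 -> derivable_pt_lim g t (g1 t)) ->
  (forall t, 0 <= t <= 1 -> derivable_pt_lim g1 t (g2 t)) ->
  (forall t, 0 <= t <= 1 -> g2 t <= c) ->
  g 1 <= g 0 + g1 0 + c / 2.
Proof.
  intros Hg Hg1 Hc.
  enough (- g 0 + - g1 0 + - c / 2 <= - g 1) by lra.
  apply (taylor2_unit_lower (fun t => - g t) (fun t => - g1 t) (fun t => - g2 t)).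
  - intros t Ht. apply (derivable_pt_lim_opp g), Hg, Ht.
  - intros t Ht. apply (derivable_pt_lim_opp g1), Hg1, Ht.
  - intros t Ht. specialize (Hc t Ht). lra.
Qed.

(** * Differentiating along segments *)

Lemma inIntD_open a b x y : inIntD a b x y ->
  exists rho, 0 < rho /\
    forall u v, Rabs (u - x) < rho -> Rabs (v - y) < rho -> inIntD a b u v.
Proof.
  intros [[Hx0 Hxa] [Hy0 Hyb]].
  exists (Rmin (Rmin x (a - x)) (Rmin y (b - y))). split.
  - repeat apply Rmin_pos; lra.
  - intros u v Hu Hv.
    pose proof (Rmin_l (Rmin x (a - x)) (Rmin y (b - y))).
    pose proof (Rmin_r (Rmin x (a - x)) (Rmin y (b - y))).
    pose proof (Rmin_l x (a - x)). pose proof (Rmin_r x (a - x)).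
    pose proof (Rmin_l y (b - y)). pose proof (Rmin_r y (b - y)).
    apply Rabs_lt_between in Hu, Hv. unfold inIntD. lra.
Qed.

Lemma C3_partial_continuous a b f F l x y : C3_on_D_with a b f F ->
  (length l <= 3)%nat -> inIntD a b x y -> continuity_2d_pt (F l) x y.
Proof.
  intros (_ & _ & _ & Hext) Hl Hxy eps.
  destruct (Hext l Hl) as [G [HG EG]].
  assert (HxyD : inD a b x y) by (unfold inD, inIntD in *; lra).
  destruct (HG x y HxyD eps (cond_pos eps)) as [d [Hd Hclose]].
  destruct (inIntD_open a b x y Hxy) as [rho [Hrho Hint]].
  exists (mkposreal _ (Rmin_pos d rho Hd Hrho)). simpl. intros u v Hu Hv.
  pose proof (Rmin_l d rho). pose proof (Rmin_r d rho).
  assert (Huv : inIntD a b u v) by (apply Hint; lra).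
  rewrite <- (EG u v Huv), <- (EG x y Hxy).
  apply Hclose; [unfold inD, inIntD in *; lra | lra | lra].
Qed.

Lemma differentiable_of_continuous_partials (g gx gy : R -> R -> R) x y rho : 0 < rho ->
  (forall u v, Rabs (u - x) < rho -> Rabs (v - y) < rho ->
     derivable_pt_lim (fun t => g t v) u (gx u v) /\
     derivable_pt_lim (fun t => g u t) v (gy u v)) ->
  continuity_2d_pt gx x y -> continuity_2d_pt gy x y ->
  differentiable_pt_lim g x y (gx x y) (gy x y).
Proof.
  intros Hrho Hd Cx Cy eps.
  assert (He2 : 0 < eps / 2) by (destruct eps; simpl; lra).
  destruct (Cx (mkposreal _ He2)) as [[d1 Hd1] Hclose1].
  destruct (Cy (mkposreal _ He2)) as [[d2 Hd2] Hclose2]. simpl in *.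
  exists (mkposreal _ (Rmin_pos _ _ Hrho (Rmin_pos _ _ Hd1 Hd2))). simpl.
  intros u v Hu Hv.
  pose proof (Rmin_l rho (Rmin d1 d2)). pose proof (Rmin_r rho (Rmin d1 d2)).
  pose proof (Rmin_l d1 d2). pose proof (Rmin_r d1 d2).
  (* mean value theorem along the horizontal, then the vertical, side of the rectangle *)
  destruct (MVT_cor4 (fun t => g t y) (fun t => gx t y) x (Rabs (u - x))) with (b := u)
    as [xi [Exi Hxi]]; [|lra|].
  { intros c Hc. apply is_derive_Reals, Hd; [lra|]. rewrite Rminus_diag, Rabs_R0. lra. }
  destruct (MVT_cor4 (fun t => g u t) (fun t => gy u t) y (Rabs (v - y))) with (b := v)
    as [eta [Eeta Heta]]; [|lra|].
  { intros c Hc. apply is_derive_Reals, Hd; lra. }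
  simpl in Exi, Eeta.
  assert (A1 : Rabs (gx xi y - gx x y) < eps / 2).
  { apply Hclose1; [lra|]. rewrite Rminus_diag, Rabs_R0. lra. }
  assert (A2 : Rabs (gy u eta - gy x y) < eps / 2) by (apply Hclose2; lra).
  replace (g u v - g x y - (gx x y * (u - x) + gy x y * (v - y))) with
    ((gx xi y - gx x y) * (u - x) + (gy u eta - gy x y) * (v - y)) by lra.
  eapply Rle_trans; [apply Rabs_triang|]. rewrite !Rabs_mult.
  pose proof (Rmax_l (Rabs (u - x)) (Rabs (v - y))).
  pose proof (Rmax_r (Rabs (u - x)) (Rabs (v - y))).
  pose proof (Rabs_pos (u - x)). pose proof (Rabs_pos (v - y)).
  nra.
Qed.

Lemma derivable_pt_lim_affine x0 u t : derivable_pt_lim (fun s => x0 + s * u) t u.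
Proof.
  assert (H := derivable_pt_lim_plus (fun _ => x0) (fun s => s * u) t 0 (1 * u)
    (derivable_pt_lim_const x0 t) (derivable_pt_lim_scal_right id t 1 u (derivable_pt_lim_id t))).
  now rewrite Rplus_0_l, Rmult_1_l in H.
Qed.

Lemma C3_deriv_along_line a b f F l x0 y0 u v t : C3_on_D_with a b f F ->
  (length l < 3)%nat -> inIntD a b (x0 + t * u) (y0 + t * v) ->
  derivable_pt_lim (fun s => F l (x0 + s * u) (y0 + s * v)) t
    (F (false :: l) (x0 + t * u) (y0 + t * v) * u
     + F (true :: l) (x0 + t * u) (y0 + t * v) * v).
Proof.
  intros HF Hl Hint.
  assert (Hpartial := proj1 (proj2 (proj2 HF)) l).
  apply derivable_pt_lim_comp_2d; [|apply derivable_pt_lim_affine..].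
  destruct (inIntD_open a b _ _ Hint) as [rho [Hrho Hnear]].
  apply (differentiable_of_continuous_partials _ _ _ _ _ rho Hrho).
  - intros p q Hp Hq. split.
    + exact (Hpartial false Hl p q (Hnear p q Hp Hq)).
    + exact (Hpartial true Hl p q (Hnear p q Hp Hq)).
  - apply (C3_partial_continuous a b f); [assumption | simpl; lia | assumption].
  - apply (C3_partial_continuous a b f); [assumption | simpl; lia | assumption].
Qed.

(** * Binary quadratic forms *)

Definition qform (A B C D u v : R) : R := u * u * A + u * v * B + v * u * C + v * v * D.

Definition hess (F : list bool -> R -> R -> R) (x y : R) : R -> R -> R :=
  qform (F [false; false] x y) (F [true; false] x y) (F [false; true] x y) (F [true; true] x y).

Lemma binary_quadratic_nonneg p q s u v :
  0 < p -> s * s <= 4 * p * q -> 0 <= p * u * u + s * u * v + q * v * v.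
Proof.
  intros Hp Hdisc.
  enough (0 <= 4 * p * (p * u * u + s * u * v + q * v * v)) by nra.
  replace (4 * p * (p * u * u + s * u * v + q * v * v))
    with ((2 * p * u + s * v) * (2 * p * u + s * v) + (4 * p * q - s * s) * (v * v)) by ring.
  pose proof (Rle_0_sqr (2 * p * u + s * v)). pose proof (Rle_0_sqr v). unfold Rsqr in *.
  assert (0 <= (4 * p * q - s * s) * (v * v)) by (apply Rmult_le_pos; lra).
  lra.
Qed.

Lemma qform_pos_def_coercive A B C D :
  (forall u v, (u, v) <> (0, 0) -> 0 < qform A B C D u v) ->
  exists mu, 0 < mu /\ forall u v, mu * (u * u + v * v) <= qform A B C D u v.
Proof.
  unfold qform. intros Hpos.
  assert (HA : 0 < A) by (specialize (Hpos 1 0 ltac:(intro E; inversion E; lra)); lra).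
  assert (HD : 0 < D) by (specialize (Hpos 0 1 ltac:(intro E; inversion E; lra)); lra).
  set (S := B + C).
  assert (Hdisc : 0 < 4 * A * D - S * S).
  { specialize (Hpos S (-2 * A) ltac:(intro E; inversion E; lra)).
    replace (S * S * A + S * (-2 * A) * B + -2 * A * S * C + -2 * A * (-2 * A) * D)
      with (A * (4 * A * D - S * S)) in Hpos by (unfold S; ring).
    nra. }
  (* with this mu, the discriminant of the form minus mu (u^2 + v^2) is -4 mu^2 *)
  set (mu := (4 * A * D - S * S) / (4 * (A + D))).
  assert (Hmu : mu * (A + D) = (4 * A * D - S * S) / 4) by (unfold mu; field; lra).
  assert (Hmu0 : 0 < mu) by (unfold mu; apply Rdiv_lt_0_compat; lra).
  exists mu. split; [exact Hmu0|]. intros u v.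
  replace (u * u * A + u * v * B + v * u * C + v * v * D)
    with (mu * (u * u + v * v) + ((A - mu) * u * u + S * u * v + (D - mu) * v * v))
    by (unfold S; ring).
  enough (0 <= (A - mu) * u * u + S * u * v + (D - mu) * v * v) by lra.
  apply binary_quadratic_nonneg.
  - assert (Hlt : mu * (A + D) < A * (A + D))
      by (rewrite Hmu; pose proof (Rle_0_sqr S); unfold Rsqr in *; nra).
    apply Rmult_lt_reg_r in Hlt; lra.
  - replace (4 * (A - mu) * (D - mu)) with (4 * A * D - 4 * (mu * (A + D)) + 4 * (mu * mu))
      by ring.
    rewrite Hmu. pose proof (Rle_0_sqr mu). unfold Rsqr in *. lra.
Qed.

Lemma qform_abs_le A B C D e u v :
  Rabs A <= e -> Rabs B <= e -> Rabs C <= e -> Rabs D <= e ->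
  Rabs (qform A B C D u v) <= 2 * e * (u * u + v * v).
Proof.
  unfold qform. rewrite !Rabs_le_between. intros HA HB HC HD.
  assert (2 * Rabs (u * v) <= u * u + v * v).
  { pose proof (Rle_0_sqr (u - v)). pose proof (Rle_0_sqr (u + v)). unfold Rsqr in *.
    unfold Rabs; destruct (Rcase_abs (u * v)); nra. }
  assert (- (e * Rabs (u * v)) <= u * v * B <= e * Rabs (u * v)).
  { unfold Rabs; destruct (Rcase_abs (u * v)); split; nra. }
  assert (- (e * Rabs (u * v)) <= v * u * C <= e * Rabs (u * v)).
  { replace (v * u) with (u * v) by ring. unfold Rabs; destruct (Rcase_abs (u * v)); split; nra. }
  split; nra.
Qed.

(** * A Taylor window around the minimum *)

Definition in_square (px py d x y : R) : Prop := Rabs (x - px) <= d /\ Rabs (y - py) <= d.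

Record taylor_window (a b : R) (f : R -> R -> R) (F : list bool -> R -> R -> R)
    (px py d mu M : R) : Prop := {
  window_C3 : C3_on_D_with a b f F;
  window_interior : forall x y, in_square px py d x y -> inIntD a b x y;
  window_mu_pos : 0 < mu;
  window_hess_coercive : forall x y, in_square px py d x y ->
    forall u v, mu * (u * u + v * v) <= hess F x y u v;
  window_hess_bounded : forall x y, in_square px py d x y ->
    Rabs (F [false; false] x y) <= M /\ Rabs (F [true; false] x y) <= M /\
    Rabs (F [false; true] x y) <= M /\ Rabs (F [true; true] x y) <= M }.

Lemma continuity_2d_pt_square g x y eps : continuity_2d_pt g x y -> 0 < eps ->
  exists d, 0 < d /\ forall u v, in_square x y d u v -> Rabs (g u v - g x y) <= eps.
Proof.
  intros Hg Heps. destruct (Hg (mkposreal eps Heps)) as [[d Hd] Hclose].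
  exists (d / 2). split; [lra|]. intros u v [Hu Hv]. apply Rlt_le, Hclose; simpl; lra.
Qed.

Lemma square_nbhd_and (P Q : R -> R -> Prop) px py :
  (exists d, 0 < d /\ forall x y, in_square px py d x y -> P x y) ->
  (exists d, 0 < d /\ forall x y, in_square px py d x y -> Q x y) ->
  exists d, 0 < d /\ forall x y, in_square px py d x y -> P x y /\ Q x y.
Proof.
  intros [d1 [Hd1 HP]] [d2 [Hd2 HQ]].
  exists (Rmin d1 d2). split; [now apply Rmin_pos|].
  pose proof (Rmin_l d1 d2). pose proof (Rmin_r d1 d2).
  intros x y [Hx Hy]. split; [apply HP | apply HQ]; split; lra.
Qed.

Lemma qform_coercive_perturb mu A B C D A' B' C' D' :
  (forall u v, mu * (u * u + v * v) <= qform A B C D u v) ->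
  Rabs (A' - A) <= mu / 4 -> Rabs (B' - B) <= mu / 4 ->
  Rabs (C' - C) <= mu / 4 -> Rabs (D' - D) <= mu / 4 ->
  forall u v, mu / 2 * (u * u + v * v) <= qform A' B' C' D' u v.
Proof.
  intros Hcoer HA HB HC HD u v.
  assert (Q := qform_abs_le _ _ _ _ _ u v HA HB HC HD).
  specialize (Hcoer u v). apply Rabs_le_between in Q.
  unfold qform in *. lra.
Qed.

Lemma taylor_window_exists a b f F px py :
  C3_on_D_with a b f F -> inIntD a b px py -> hessian_pos_def F px py ->
  exists d mu M, 0 < d /\ taylor_window a b f F px py d mu M.
Proof.
  intros HF Hp Hpd.
  destruct (qform_pos_def_coercive _ _ _ _ Hpd) as [mu0 [Hmu0 Hcoer0]].
  assert (Hcont : forall l, (length l = 2)%nat -> exists d, 0 < d /\ forall x y,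
            in_square px py d x y -> Rabs (F l x y - F l px py) <= mu0 / 4).
  { intros l Hl. apply continuity_2d_pt_square; [|lra].
    apply (C3_partial_continuous a b f); [assumption | lia | assumption]. }
  assert (Hint : exists d, 0 < d /\ forall x y, in_square px py d x y -> inIntD a b x y).
  { destruct (inIntD_open a b px py Hp) as [rho [Hrho Hint]].
    exists (rho / 2). split; [lra|]. intros x y [Hx Hy]. apply Hint; lra. }
  destruct (square_nbhd_and _ _ _ _ Hint (square_nbhd_and _ _ _ _ (Hcont [false; false] eq_refl)
             (square_nbhd_and _ _ _ _ (Hcont [true; false] eq_refl)
             (square_nbhd_and _ _ _ _ (Hcont [false; true] eq_refl) (Hcont [true; true] eq_refl)))))
    as [d [Hd Hnear]].
  exists d, (mu0 / 2),
    (Rabs (F [false; false] px py) + Rabs (F [true; false] px py)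
     + Rabs (F [false; true] px py) + Rabs (F [true; true] px py) + mu0 / 4).
  split; [exact Hd|]. split.
  - exact HF.
  - intros x y Hxy. apply Hnear, Hxy.
  - lra.
  - intros x y Hxy. destruct (Hnear x y Hxy) as (_ & E1 & E2 & E3 & E4).
    exact (qform_coercive_perturb _ _ _ _ _ _ _ _ _ Hcoer0 E1 E2 E3 E4).
  - intros x y Hxy. destruct (Hnear x y Hxy) as (_ & E1 & E2 & E3 & E4).
    pose proof (Rabs_pos (F [false; false] px py)). pose proof (Rabs_pos (F [true; false] px py)).
    pose proof (Rabs_pos (F [false; true] px py)). pose proof (Rabs_pos (F [true; true] px py)).
    pose proof (Rabs_triang_inv (F [false; false] x y) (F [false; false] px py)).
    pose proof (Rabs_triang_inv (F [true; false] x y) (F [true; false] px py)).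
    pose proof (Rabs_triang_inv (F [false; true] x y) (F [false; true] px py)).
    pose proof (Rabs_triang_inv (F [true; true] x y) (F [true; true] px py)).
    repeat split; lra.
Qed.

Definition dir_deriv (F : list bool -> R -> R -> R) (x y u v : R) : R :=
  F [false] x y * u + F [true] x y * v.

Lemma in_square_segment px py d x y u v t :
  in_square px py d x y -> in_square px py d (x + u) (y + v) -> 0 <= t <= 1 ->
  in_square px py d (x + t * u) (y + t * v).
Proof.
  unfold in_square. rewrite !Rabs_le_between. intros [Hx Hy] [Hxu Hyv] Ht.
  replace (x + t * u - px) with ((1 - t) * (x - px) + t * (x + u - px)) by ring.
  replace (y + t * v - py) with ((1 - t) * (y - py) + t * (y + v - py)) by ring.
  nra.
Qed.

Lemma in_square_center px py d x y : in_square px py d x y -> in_square px py d px py.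
Proof.
  intros [Hx _]. pose proof (Rabs_pos (x - px)).
  unfold in_square. rewrite !Rminus_diag, Rabs_R0. lra.
Qed.

Section Window.

Variables (a b : R) (f : R -> R -> R) (F : list bool -> R -> R -> R) (px py d mu M : R).
Hypothesis Hw : taylor_window a b f F px py d mu M.

Lemma window_M_nonneg x y : in_square px py d x y -> 0 <= M.
Proof.
  intros Hxy. destruct (window_hess_bounded _ _ _ _ _ _ _ _ _ Hw x y Hxy) as [H _].
  pose proof (Rabs_pos (F [false; false] x y)). lra.
Qed.

Lemma window_line_derivs x y u v t :
  in_square px py d x y -> in_square px py d (x + u) (y + v) -> 0 <= t <= 1 ->
  derivable_pt_lim (fun s => f (x + s * u) (y + s * v)) t
    (dir_deriv F (x + t * u) (y + t * v) u v) /\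
  derivable_pt_lim (fun s => dir_deriv F (x + s * u) (y + s * v) u v) t
    (hess F (x + t * u) (y + t * v) u v).
Proof.
  intros Hxy Huv Ht.
  assert (HF := window_C3 _ _ _ _ _ _ _ _ _ Hw).
  assert (Hint := window_interior _ _ _ _ _ _ _ _ _ Hw _ _
                    (in_square_segment _ _ _ _ _ _ _ _ Hxy Huv Ht)).
  split.
  - rewrite <- (proj1 HF).
    apply (C3_deriv_along_line a b f F []); [assumption | simpl; lia | assumption].
  - assert (E : forall p q, hess F p q u v =
                  (F [false; false] p q * u + F [true; false] p q * v) * u
                  + (F [false; true] p q * u + F [true; true] p q * v) * v)
      by (intros; unfold hess, qform; ring).
    unfold dir_deriv. rewrite E.
    apply (derivable_pt_lim_plus (fun s => F [false] (x + s * u) (y + s * v) * u)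
                                 (fun s => F [true] (x + s * u) (y + s * v) * v));
      apply derivable_pt_lim_scal_right, (C3_deriv_along_line a b f F); auto.
Qed.

Lemma window_taylor_lower x y u v :
  in_square px py d x y -> in_square px py d (x + u) (y + v) ->
  f x y + dir_deriv F x y u v + mu / 2 * (u * u + v * v) <= f (x + u) (y + v).
Proof.
  intros Hxy Huv.
  assert (E := taylor2_unit_lower (fun s => f (x + s * u) (y + s * v))
                 (fun s => dir_deriv F (x + s * u) (y + s * v) u v)
                 (fun s => hess F (x + s * u) (y + s * v) u v) (mu * (u * u + v * v))).
  cbv beta in E. rewrite !Rmult_0_l, !Rmult_1_l, !Rplus_0_r in E.
  replace (mu / 2 * (u * u + v * v)) with (mu * (u * u + v * v) / 2) by field.
  apply E; intros t Ht; try apply (window_line_derivs x y u v t Hxy Huv Ht).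
  apply (window_hess_coercive _ _ _ _ _ _ _ _ _ Hw), in_square_segment; assumption.
Qed.

Lemma window_taylor_upper x y u v :
  in_square px py d x y -> in_square px py d (x + u) (y + v) ->
  f (x + u) (y + v) <= f x y + dir_deriv F x y u v + M * (u * u + v * v).
Proof.
  intros Hxy Huv.
  assert (E := taylor2_unit_upper (fun s => f (x + s * u) (y + s * v))
                 (fun s => dir_deriv F (x + s * u) (y + s * v) u v)
                 (fun s => hess F (x + s * u) (y + s * v) u v) (2 * M * (u * u + v * v))).
  cbv beta in E. rewrite !Rmult_0_l, !Rmult_1_l, !Rplus_0_r in E.
  replace (M * (u * u + v * v)) with (2 * M * (u * u + v * v) / 2) by field.
  apply E; intros t Ht; try apply (window_line_derivs x y u v t Hxy Huv Ht).
  assert (Hs := in_square_segment _ _ _ _ _ _ _ _ Hxy Huv Ht).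
  destruct (window_hess_bounded _ _ _ _ _ _ _ _ _ Hw _ _ Hs) as (B1 & B2 & B3 & B4).
  apply Rabs_le_between, (qform_abs_le _ _ _ _ _ u v B1 B2 B3 B4).
Qed.

Lemma window_first_partial_lipschitz l x y :
  l = [false] \/ l = [true] -> in_square px py d x y ->
  Rabs (F l x y - F l px py) <= M * (Rabs (x - px) + Rabs (y - py)).
Proof.
  intros Hl Hxy.
  assert (Hp := in_square_center _ _ _ _ _ Hxy).
  assert (Hxy' : in_square px py d (px + (x - px)) (py + (y - py)))
    by (now replace (px + (x - px)) with x by ring; replace (py + (y - py)) with y by ring).
  destruct (MVT_abs (fun s => F l (px + s * (x - px)) (py + s * (y - py)))
      (fun s => F (false :: l) (px + s * (x - px)) (py + s * (y - py)) * (x - px)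
              + F (true :: l) (px + s * (x - px)) (py + s * (y - py)) * (y - py)) 0 1)
    as [c [Ec Hc]].
  { intros c Hc. rewrite Rmin_left, Rmax_right in Hc by lra.
    apply (C3_deriv_along_line a b f F); [apply (window_C3 _ _ _ _ _ _ _ _ _ Hw)| |].
    - destruct Hl as [-> | ->]; simpl; lia.
    - apply (window_interior _ _ _ _ _ _ _ _ _ Hw), in_square_segment; assumption. }
  rewrite Rmin_left, Rmax_right in Hc by lra.
  cbv beta in Ec. rewrite !Rmult_0_l, !Rmult_1_l, !Rplus_0_r in Ec.
  replace (px + (x - px)) with x in Ec by ring. replace (py + (y - py)) with y in Ec by ring.
  rewrite Ec, Rminus_0_r, Rabs_R1, Rmult_1_r.
  assert (Hs := in_square_segment _ _ _ _ _ _ _ _ Hp Hxy' Hc).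
  destruct (window_hess_bounded _ _ _ _ _ _ _ _ _ Hw _ _ Hs) as (B1 & B2 & B3 & B4).
  eapply Rle_trans; [apply Rabs_triang|]. rewrite !Rabs_mult.
  pose proof (Rabs_pos (x - px)). pose proof (Rabs_pos (y - py)).
  destruct Hl as [-> | ->]; nra.
Qed.

Hypothesis Hcrit : F [false] px py = 0 /\ F [true] px py = 0.

Lemma window_dir_deriv_le x y u v : in_square px py d x y ->
  dir_deriv F x y u v <= M * (Rabs (x - px) + Rabs (y - py)) * (Rabs u + Rabs v).
Proof.
  intros Hxy. destruct Hcrit as [Cx Cy].
  assert (Gx := window_first_partial_lipschitz [false] x y (or_introl eq_refl) Hxy).
  assert (Gy := window_first_partial_lipschitz [true] x y (or_intror eq_refl) Hxy).
  rewrite Cx, Rminus_0_r in Gx. rewrite Cy, Rminus_0_r in Gy.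
  unfold dir_deriv.
  pose proof (Rle_abs (F [false] x y * u)). pose proof (Rle_abs (F [true] x y * v)).
  rewrite Rabs_mult in *.
  pose proof (Rabs_pos u). pose proof (Rabs_pos v).
  pose proof (Rabs_pos (F [false] x y)). pose proof (Rabs_pos (F [true] x y)).
  nra.
Qed.

Lemma window_descent x y x' y' t e1 e2 :
  in_square px py d x y -> in_square px py d x' y' ->
  in_square px py d (x + t * (x' - x) + e1) (y + t * (y' - y) + e2) ->
  0 < t -> 8 * M * t <= mu -> f x' y' < f x y ->
  f (x + t * (x' - x) + e1) (y + t * (y' - y) + e2)
  < f x y - mu / 4 * (t * ((x' - x) * (x' - x) + (y' - y) * (y' - y)))
    + M * (Rabs (x - px) + Rabs (y - py)) * (Rabs e1 + Rabs e2) + 2 * M * (e1 * e1 + e2 * e2).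
Proof.
  intros Hxy Hxy' Hk Ht HtM Hlt.
  assert (Hslope : dir_deriv F x y (x' - x) (y' - y)
                   < - (mu / 2 * ((x' - x) * (x' - x) + (y' - y) * (y' - y)))).
  { assert (T := window_taylor_lower x y (x' - x) (y' - y) Hxy).
    replace (x + (x' - x)) with x' in T by ring.
    replace (y + (y' - y)) with y' in T by ring. specialize (T Hxy'). lra. }
  set (w1 := x' - x) in *. set (w2 := y' - y) in *. set (W := w1 * w1 + w2 * w2) in *.
  assert (HM := window_M_nonneg x y Hxy).
  assert (HW : 0 <= W) by (unfold W; pose proof (Rle_0_sqr w1); pose proof (Rle_0_sqr w2);
                           unfold Rsqr in *; lra).
  assert (T := window_taylor_upper x y (t * w1 + e1) (t * w2 + e2) Hxy).
  rewrite <- !Rplus_assoc in T. specialize (T Hk).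
  replace (dir_deriv F x y (t * w1 + e1) (t * w2 + e2))
    with (t * dir_deriv F x y w1 w2 + dir_deriv F x y e1 e2) in T by (unfold dir_deriv; ring).
  assert (Hgrad := window_dir_deriv_le x y e1 e2 Hxy).
  assert (Hsq : (t * w1 + e1) * (t * w1 + e1) + (t * w2 + e2) * (t * w2 + e2)
                <= 2 * (t * t) * W + 2 * (e1 * e1 + e2 * e2)).
  { pose proof (Rle_0_sqr (t * w1 - e1)). pose proof (Rle_0_sqr (t * w2 - e2)).
    unfold Rsqr, W in *. nra. }
  assert (M * ((t * w1 + e1) * (t * w1 + e1) + (t * w2 + e2) * (t * w2 + e2))
          <= M * (2 * (t * t) * W + 2 * (e1 * e1 + e2 * e2))) by (apply Rmult_le_compat_l; lra).
  assert (t * dir_deriv F x y w1 w2 < t * - (mu / 2 * W)) by (apply Rmult_lt_compat_l; lra).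
  assert (2 * M * t * (t * W) <= mu / 4 * (t * W)) by (apply Rmult_le_compat_r; nra).
  lra.
Qed.

End Window.

Lemma local_min_grad_zero a b f F px py : C3_on_D_with a b f F -> inIntD a b px py ->
  local_min_on_D a b f px py -> F [false] px py = 0 /\ F [true] px py = 0.
Proof.
  intros [Ff [_ [Hpartial _]]] Hp [dl [Hdl Hmin]].
  destruct (inIntD_open a b px py Hp) as [rho [Hrho Hint]].
  set (m := Rmin dl rho).
  assert (Hm : 0 < m) by (apply Rmin_pos; assumption).
  assert (m <= dl) by apply Rmin_l. assert (m <= rho) by apply Rmin_r.
  assert (Hnear : forall x y, Rabs (x - px) < m -> Rabs (y - py) < m -> f px py <= f x y).
  { intros x y Hx Hy. apply Hmin; [|lra|lra].
    destruct (Hint x y ltac:(lra) ltac:(lra)) as [[? ?] [? ?]]. split; lra. }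
  split.
  - assert (D := Hpartial [] false ltac:(simpl; lia) px py Hp). simpl in D. rewrite Ff in D.
    apply (deriv_minimum (fun t => f t py) (px - m) (px + m) px (exist _ _ D)); try lra.
    intros x H1 H2. apply Hnear; [apply Rabs_lt_between; lra|].
    rewrite Rminus_diag, Rabs_R0. lra.
  - assert (D := Hpartial [] true ltac:(simpl; lia) px py Hp). simpl in D. rewrite Ff in D.
    apply (deriv_minimum (fun t => f px t) (py - m) (py + m) py (exist _ _ D)); try lra.
    intros y H1 H2. apply Hnear; [|apply Rabs_lt_between; lra].
    rewrite Rminus_diag, Rabs_R0. lra.
Qed.

(** * Grid vertices *)

Lemma exists_nat_near x : 0 <= x -> exists k : nat, Rabs (INR k - x) <= 1 / 2.
Proof.
  intros Hx. destruct (archimed (x + 1 / 2)) as [Hup Hup'].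
  assert (Hz : (1 <= up (x + 1 / 2))%Z).
  { apply le_IZR. destruct (Z_lt_le_dec (up (x + 1 / 2)) 1) as [Hlt|Hle]; [|now apply IZR_le].
    assert (Hle : (up (x + 1 / 2) <= 0)%Z) by lia. apply IZR_le in Hle. lra. }
  exists (Z.to_nat (up (x + 1 / 2) - 1)).
  rewrite INR_IZR_INZ, Znat.Z2Nat.id, minus_IZR by lia.
  apply Rabs_le_between. lra.
Qed.

Lemma exists_list_argmin {T : Type} (P : T -> Prop) (g : T -> R) (L : list T) :
  (exists x, In x L /\ P x) ->
  exists x, In x L /\ P x /\ forall y, In y L -> P y -> g x <= g y.
Proof.
  induction L as [|z L IH]; intros [x [Hx Px]]; [destruct Hx|].
  destruct (classic (exists x, In x L /\ P x)) as [Htail|Hnone].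
  - destruct (IH Htail) as [m [Hm [Pm Mm]]].
    destruct (classic (P z /\ g z <= g m)) as [[Pz Hz]|Hz].
    + exists z. repeat split; [now left | assumption |].
      intros y [<-|Hy] Py; [lra|]. specialize (Mm y Hy Py). lra.
    + exists m. repeat split; [now right | assumption |].
      intros y [<-|Hy] Py; [|auto].
      destruct (Rle_lt_dec (g m) (g z)); [assumption|]. exfalso; apply Hz; split; [assumption|lra].
  - assert (x = z) as -> by (destruct Hx as [<-|Hx]; [reflexivity | exfalso; eauto]).
    exists z. repeat split; [now left | assumption |].
    intros y [<-|Hy] Py; [lra | exfalso; eauto].
Qed.

Lemma exists_grid_argmin (P : nat -> nat -> Prop) (g : nat -> nat -> R) n :
  (exists i j, (i <= n)%nat /\ (j <= n)%nat /\ P i j) ->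
  exists i j, (i <= n)%nat /\ (j <= n)%nat /\ P i j /\
    forall l m, (l <= n)%nat -> (m <= n)%nat -> P l m -> g i j <= g l m.
Proof.
  intros [i [j [Hi [Hj Pij]]]].
  set (L := list_prod (seq 0 (S n)) (seq 0 (S n))).
  assert (HL : forall i j, In (i, j) L <-> (i <= n)%nat /\ (j <= n)%nat)
    by (intros; unfold L; rewrite in_prod_iff, !in_seq; lia).
  destruct (exists_list_argmin (fun p => P (fst p) (snd p)) (fun p => g (fst p) (snd p)) L)
    as [[i0 j0] [Hin [Pm Mm]]].
  { exists (i, j). split; [apply HL|]; auto. }
  apply HL in Hin. exists i0, j0. simpl in *.
  repeat split; try tauto. intros l m Hl Hm Plm. apply (Mm (l, m)); [apply HL|]; auto.
Qed.

Lemma exists_nat_div_lt C e : 0 < e ->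
  exists N : nat, forall n : nat, (N <= n)%nat -> (1 <= n)%nat -> C / INR n < e.
Proof.
  intros He. destruct (archimed (C / e)) as [Hup _].
  exists (Z.to_nat (up (C / e))). intros n HNn Hn.
  assert (Hn0 : 0 < INR n) by (apply lt_0_INR; lia).
  assert (C / e < INR n).
  { eapply Rlt_le_trans; [apply Hup|].
    destruct (Z_lt_le_dec (up (C / e)) 0) as [Hneg|Hnneg].
    - apply Rle_trans with 0; [apply IZR_le; lia | apply pos_INR].
    - rewrite <- (Znat.Z2Nat.id (up (C / e))), <- INR_IZR_INZ by lia. now apply le_INR. }
  apply Rmult_lt_reg_r with (INR n); [assumption|].
  apply Rmult_lt_reg_r with (/ e); [now apply Rinv_0_lt_compat|].
  replace (C / INR n * INR n * / e) with (C / e) by (field; lra).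
  replace (e * INR n * / e) with (INR n) by (field; lra). assumption.
Qed.

Lemma gx_sub a n l i : gx a n l - gx a n i = (INR l - INR i) * a / INR n.
Proof. unfold gx, Rdiv. ring. Qed.

Lemma gy_sub b n l j : gy b n l - gy b n j = (INR l - INR j) * b / INR n.
Proof. unfold gy, Rdiv. ring. Qed.

Lemma gx_le_index a n k : 0 < a -> (1 <= n)%nat -> gx a n k <= a -> (k <= n)%nat.
Proof.
  intros Ha Hn Hk. unfold gx in Hk.
  assert (Hn0 : 0 < INR n) by (apply lt_0_INR; lia).
  apply INR_le, Rmult_le_reg_r with (a / INR n); [now apply Rdiv_lt_0_compat|].
  replace (INR n * (a / INR n)) with a by (field; lra).
  replace (INR k * (a / INR n)) with (INR k / INR n * a) by (field; lra). assumption.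
Qed.

Lemma sq_le_lin s K h : 0 <= s -> 0 <= K -> 0 < h -> s * s <= K * (h * h) -> s <= (K + 1) * h.
Proof.
  intros Hs HK Hh Hsq.
  assert (Hy : s = s / h * h) by (field; lra).
  assert (0 <= s / h) by (apply Rdiv_le_0_compat; lra).
  rewrite Hy in Hsq |- *. apply Rmult_le_compat_r; [lra|].
  assert (s / h * (s / h) <= K) by (apply Rmult_le_reg_r with (h * h); nra).
  destruct (Rle_lt_dec (s / h) 1); nra.
Qed.

Lemma sum_sq_ge_min_max d1 d2 a b h :
  0 < a -> 0 < b ->
  Rmin a b * Rmin a b * (h * h) * (Rmax (Rabs d1) (Rabs d2) * Rmax (Rabs d1) (Rabs d2))
  <= (d1 * a * h) * (d1 * a * h) + (d2 * b * h) * (d2 * b * h).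
Proof.
  intros Ha Hb.
  assert (Hc : 0 < Rmin a b) by (apply Rmin_pos; assumption).
  pose proof (Rmin_l a b). pose proof (Rmin_r a b).
  assert (Hmax : Rmax (Rabs d1) (Rabs d2) * Rmax (Rabs d1) (Rabs d2) <= d1 * d1 + d2 * d2).
  { assert (Habs : forall x, Rabs x * Rabs x = x * x)
      by (intro x; rewrite <- Rabs_mult; apply Rabs_pos_eq, Rle_0_sqr).
    pose proof (Rle_0_sqr d1). pose proof (Rle_0_sqr d2). unfold Rsqr in *.
    unfold Rmax. destruct (Rle_dec (Rabs d1) (Rabs d2)); rewrite Habs; lra. }
  pose proof (Rle_0_sqr h). pose proof (Rle_0_sqr d1). pose proof (Rle_0_sqr d2). unfold Rsqr in *.
  assert (Rmin a b * Rmin a b <= a * a) by nra.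
  assert (Rmin a b * Rmin a b <= b * b) by nra.
  assert (Rmin a b * Rmin a b * (h * h) * (Rmax (Rabs d1) (Rabs d2) * Rmax (Rabs d1) (Rabs d2))
          <= Rmin a b * Rmin a b * (h * h) * (d1 * d1 + d2 * d2))
    by (apply Rmult_le_compat_l; nra).
  assert (Rmin a b * Rmin a b * (h * h) * (d1 * d1) <= a * a * (h * h) * (d1 * d1))
    by (apply Rmult_le_compat_r; [nra|]; apply Rmult_le_compat_r; nra).
  assert (Rmin a b * Rmin a b * (h * h) * (d2 * d2) <= b * b * (h * h) * (d2 * d2))
    by (apply Rmult_le_compat_r; [nra|]; apply Rmult_le_compat_r; nra).
  replace ((d1 * a * h) * (d1 * a * h) + (d2 * b * h) * (d2 * b * h))
    with (a * a * (h * h) * (d1 * d1) + b * b * (h * h) * (d2 * d2)) by ring.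
  lra.
Qed.

Lemma sum_sq_le_of_abs_le e1 e2 x y :
  Rabs e1 <= x -> Rabs e2 <= y -> e1 * e1 + e2 * e2 <= (x + y) * (x + y).
Proof.
  rewrite !Rabs_le_between. intros He1 He2.
  assert (0 <= (x - e1) * (x + e1)) by (apply Rmult_le_pos; lra).
  assert (0 <= (y - e2) * (y + e2)) by (apply Rmult_le_pos; lra).
  nra.
Qed.

Lemma descent_step_size mu M rho r Dd :
  0 <= M -> 1 <= rho -> rho + 1 / 2 <= r -> 8 * M * rho <= mu * r -> r < Dd ->
  0 < rho / Dd < 1 /\ 8 * M * (rho / Dd) <= mu.
Proof.
  intros HM Hrho Hr HrM HDd.
  assert (Ht : rho / Dd * Dd = rho) by (field; lra).
  split; [split|].
  - apply Rdiv_lt_0_compat; lra.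
  - apply Rmult_lt_reg_r with Dd; lra.
  - apply Rmult_le_reg_r with r; [lra|].
    assert (M * (rho / Dd) * r <= M * (rho / Dd) * Dd)
      by (apply Rmult_le_compat_l; [apply Rmult_le_pos; [|apply Rlt_le, Rdiv_lt_0_compat]|]; lra).
    nra.
Qed.

Lemma descent_budget mu M A c Cm rho Dd tW Z E1 E2 h :
  0 <= mu -> 0 <= M -> 0 <= A -> 0 <= Cm -> 0 < h -> 1 <= Dd -> 0 <= Z -> 0 <= E1 ->
  rho * (c * c) * (h * h) * Dd <= tW -> Z <= (Dd * A + Cm) * h ->
  E1 <= A * h / 2 -> E2 <= A * h / 2 * (A * h / 2) ->
  M * A * A + M * A * Cm <= mu / 4 * rho * (c * c) ->
  - (mu / 4 * tW) + M * Z * E1 + 2 * M * E2 <= 0.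
Proof.
  intros Hmu HM HA HCm Hh HDd HZ HE1 HtW HZle HE1le HE2le Hrho.
  assert (M * Z * E1 <= M * ((Dd * A + Cm) * h) * (A * h / 2)).
  { apply Rmult_le_compat; [nra | lra | apply Rmult_le_compat_l; lra | lra]. }
  assert (Hsum : M * ((Dd * A + Cm) * h) * (A * h / 2) + 2 * M * (A * A * (h * h) / 4)
                 <= (M * A * A + M * A * Cm) * Dd * (h * h)).
  { replace (M * ((Dd * A + Cm) * h) * (A * h / 2) + 2 * M * (A * A * (h * h) / 4))
      with ((M * A * A * Dd + M * A * Cm + M * A * A) / 2 * (h * h)) by field.
    apply Rmult_le_compat_r; [nra|].
    assert (0 <= M * A * A) by (apply Rmult_le_pos; nra).
    assert (0 <= M * A * Cm) by (apply Rmult_le_pos; nra).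
    nra. }
  assert ((M * A * A + M * A * Cm) * Dd * (h * h) <= mu / 4 * rho * (c * c) * Dd * (h * h))
    by (apply Rmult_le_compat_r; [nra|]; apply Rmult_le_compat_r; lra).
  assert (2 * M * E2 <= 2 * M * (A * A * (h * h) / 4))
    by (apply Rmult_le_compat_l; [lra|];
        replace (A * A * (h * h) / 4) with (A * h / 2 * (A * h / 2)) by field; assumption).
  assert (mu / 4 * (rho * (c * c) * (h * h) * Dd) <= mu / 4 * tW)
    by (apply Rmult_le_compat_l; lra).
  replace (mu / 4 * rho * (c * c) * Dd * (h * h))
    with (mu / 4 * (rho * (c * c) * (h * h) * Dd)) in * by ring.
  lra.
Qed.

Lemma grid_coord_near a n x : 0 < a -> (1 <= n)%nat -> 0 <= x ->
  exists k, Rabs (gx a n k - x) <= a / 2 / INR n.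
Proof.
  intros Ha Hn Hx.
  assert (Hn0 : 0 < INR n) by (apply lt_0_INR; lia).
  destruct (exists_nat_near (x * INR n / a)) as [k Hk].
  { apply Rdiv_le_0_compat; [apply Rmult_le_pos|]; lra. }
  exists k.
  replace (gx a n k - x) with ((INR k - x * INR n / a) * (a / INR n)) by (unfold gx; field; lra).
  rewrite Rabs_mult, (Rabs_pos_eq (a / INR n)) by (left; now apply Rdiv_lt_0_compat).
  replace (a / 2 / INR n) with (1 / 2 * (a / INR n)) by (field; lra).
  apply Rmult_le_compat_r; [left; now apply Rdiv_lt_0_compat | assumption].
Qed.

Lemma grid_round_toward a n i i0 t : 0 < a -> (1 <= n)%nat -> 0 <= t <= 1 ->
  exists k, Rabs (gx a n k - (gx a n i + t * (gx a n i0 - gx a n i))) <= a / 2 / INR n /\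
            Rabs (INR k - INR i) <= t * Rabs (INR i0 - INR i) + 1 / 2.
Proof.
  intros Ha Hn Ht.
  assert (Hn0 : 0 < INR n) by (apply lt_0_INR; lia).
  destruct (exists_nat_near (INR i + t * (INR i0 - INR i))) as [k Hk].
  { replace (INR i + t * (INR i0 - INR i)) with ((1 - t) * INR i + t * INR i0) by ring.
    pose proof (pos_INR i). pose proof (pos_INR i0).
    assert (0 <= (1 - t) * INR i) by (apply Rmult_le_pos; lra).
    assert (0 <= t * INR i0) by (apply Rmult_le_pos; lra). lra. }
  exists k. split.
  - replace (gx a n k - (gx a n i + t * (gx a n i0 - gx a n i)))
      with ((INR k - (INR i + t * (INR i0 - INR i))) * (a / INR n)) by (unfold gx; field; lra).
    rewrite Rabs_mult, (Rabs_pos_eq (a / INR n)) by (left; now apply Rdiv_lt_0_compat).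
    replace (a / 2 / INR n) with (1 / 2 * (a / INR n)) by (field; lra).
    apply Rmult_le_compat_r; [left; now apply Rdiv_lt_0_compat | assumption].
  - replace (INR k - INR i) with ((INR k - (INR i + t * (INR i0 - INR i))) + t * (INR i0 - INR i))
      by ring.
    eapply Rle_trans; [apply Rabs_triang|]. rewrite Rabs_mult, (Rabs_pos_eq t) by lra. lra.
Qed.

Lemma grid_dist_le a n l i s : 0 < a -> (1 <= n)%nat ->
  Rabs (INR l - INR i) <= s -> Rabs (gx a n l - gx a n i) <= s * a / INR n.
Proof.
  intros Ha Hn Hs. assert (Hn0 : 0 < INR n) by (apply lt_0_INR; lia).
  rewrite gx_sub, Rabs_div, Rabs_mult, (Rabs_pos_eq a), (Rabs_pos_eq (INR n)) by lra.
  apply Rmult_le_compat_r; [left; now apply Rinv_0_lt_compat|].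
  apply Rmult_le_compat_r; lra.
Qed.

Definition window_grid_argmin (a b : R) (f : R -> R -> R) (px py d : R) (n i j : nat) : Prop :=
  in_square px py d (gx a n i) (gy b n j) /\
  forall l m, in_square px py d (gx a n l) (gy b n m) ->
    f (gx a n i) (gy b n j) <= f (gx a n l) (gy b n m).

Section Grid.

Variables (a b : R) (f : R -> R -> R) (F : list bool -> R -> R -> R) (px py d mu M : R) (n : nat).
Hypotheses (Ha : 0 < a) (Hb : 0 < b) (Hn : (1 <= n)%nat).
Hypothesis Hw : taylor_window a b f F px py d mu M.
Hypothesis Hcrit : F [false] px py = 0 /\ F [true] px py = 0.

Lemma window_grid_index_le i j :
  in_square px py d (gx a n i) (gy b n j) -> (i <= n)%nat /\ (j <= n)%nat.
Proof.
  intros Hij. destruct (window_interior _ _ _ _ _ _ _ _ _ Hw _ _ Hij) as [[_ Hi] [_ Hj]].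
  split; [apply (gx_le_index a) | apply (gx_le_index b)]; auto; now apply Rlt_le.
Qed.

Lemma window_grid_point_near_center : (a + b) / INR n <= d ->
  exists k1 k2, in_square px py d (gx a n k1) (gy b n k2) /\
    Rabs (gx a n k1 - px) <= a / 2 / INR n /\ Rabs (gy b n k2 - py) <= b / 2 / INR n.
Proof.
  intros Hfine.
  assert (Hn0 : 0 < INR n) by (apply lt_0_INR; lia).
  assert (Hstep : a / 2 / INR n <= (a + b) / INR n /\ b / 2 / INR n <= (a + b) / INR n).
  { unfold Rdiv. split; apply Rmult_le_compat_r; try lra; left; now apply Rinv_0_lt_compat. }
  assert (Hp : in_square px py d px py).
  { assert (0 < (a + b) / INR n) by (apply Rdiv_lt_0_compat; lra).
    unfold in_square. rewrite !Rminus_diag, Rabs_R0. lra. }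
  destruct (window_interior _ _ _ _ _ _ _ _ _ Hw _ _ Hp) as [[Hpx _] [Hpy _]].
  destruct (grid_coord_near a n px Ha Hn ltac:(lra)) as [k1 Hk1].
  destruct (grid_coord_near b n py Hb Hn ltac:(lra)) as [k2 Hk2].
  change (gx b n k2) with (gy b n k2) in Hk2.
  exists k1, k2. unfold in_square. repeat split; lra.
Qed.

Lemma window_grid_argmin_exists : (a + b) / INR n <= d ->
  exists i0 j0, window_grid_argmin a b f px py d n i0 j0.
Proof.
  intros Hfine.
  destruct window_grid_point_near_center as (k1 & k2 & Hk & _); [exact Hfine|].
  destruct (exists_grid_argmin (fun i j => in_square px py d (gx a n i) (gy b n j))
                               (fun i j => f (gx a n i) (gy b n j)) n)
    as (i0 & j0 & _ & _ & Hin & Hmin).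
  { exists k1, k2. destruct (window_grid_index_le _ _ Hk). auto. }
  exists i0, j0. split; [exact Hin|].
  intros l m Hlm. destruct (window_grid_index_le l m Hlm). now apply Hmin.
Qed.

Lemma window_grid_argmin_near_center i0 j0 : (a + b) / INR n <= d ->
  window_grid_argmin a b f px py d n i0 j0 ->
  Rabs (gx a n i0 - px) + Rabs (gy b n j0 - py) <= (M * (a + b) * (a + b) / mu + 1) / INR n.
Proof.
  intros Hfine [Hm Hmin].
  assert (Hn0 : 0 < INR n) by (apply lt_0_INR; lia).
  assert (Hmu := window_mu_pos _ _ _ _ _ _ _ _ _ Hw).
  assert (Hp := in_square_center _ _ _ _ _ Hm).
  assert (HM := window_M_nonneg _ _ _ _ _ _ _ _ _ Hw _ _ Hp).
  assert (Hflat : forall u v, dir_deriv F px py u v = 0)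
    by (intros; unfold dir_deriv; destruct Hcrit as [-> ->]; ring).
  destruct window_grid_point_near_center as (k1 & k2 & Hk & Hk1 & Hk2); [exact Hfine|].
  set (e1 := gx a n k1 - px) in *. set (e2 := gy b n k2 - py) in *.
  set (w1 := gx a n i0 - px). set (w2 := gy b n j0 - py).
  assert (Hup := window_taylor_upper _ _ _ _ _ _ _ _ _ Hw px py e1 e2 Hp).
  assert (Hlow := window_taylor_lower _ _ _ _ _ _ _ _ _ Hw px py w1 w2 Hp).
  unfold e1, e2, w1, w2 in Hup, Hlow. rewrite !Rplus_minus in Hup, Hlow.
  fold e1 e2 w1 w2 in Hup, Hlow.
  specialize (Hup Hk). specialize (Hlow Hm). rewrite Hflat in Hup, Hlow.
  specialize (Hmin k1 k2 Hk).
  set (h := / INR n).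
  assert (Hh : 0 < h) by (now apply Rinv_0_lt_compat).
  assert (He : e1 * e1 + e2 * e2 <= (a + b) * (a + b) / 4 * (h * h)).
  { apply Rabs_le_between in Hk1, Hk2. unfold Rdiv in Hk1, Hk2. fold h in Hk1, Hk2. nra. }
  assert (HW : mu / 2 * (w1 * w1 + w2 * w2) <= M * ((a + b) * (a + b) / 4 * (h * h)))
    by (apply Rmult_le_compat_l with (r := M) in He; lra).
  apply sq_le_lin; [pose proof (Rabs_pos w1); pose proof (Rabs_pos w2); lra | | exact Hh |].
  - apply Rdiv_le_0_compat; [|lra]. apply Rmult_le_pos; nra.
  - apply Rle_trans with (2 * (w1 * w1 + w2 * w2)).
    + rewrite <- (Rabs_pos_eq (w1 * w1)), <- (Rabs_pos_eq (w2 * w2)), !Rabs_mult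
        by apply Rle_0_sqr.
      pose proof (Rle_0_sqr (Rabs w1 - Rabs w2)). unfold Rsqr in *. lra.
    + apply Rmult_le_reg_l with (mu / 2); [lra|]. fold h.
      replace (mu / 2 * (M * (a + b) * (a + b) / mu * (h * h)))
        with (M * ((a + b) * (a + b) / 4 * (h * h)) * 2) by (field; lra).
      replace (mu / 2 * (2 * (w1 * w1 + w2 * w2))) with (mu / 2 * (w1 * w1 + w2 * w2) * 2)
        by ring.
      lra.
Qed.

Lemma window_grid_argmin_minimal_in_circle i0 j0 r Cm :
  window_grid_argmin a b f px py d n i0 j0 ->
  Rabs (gx a n i0 - px) + Rabs (gy b n j0 - py) <= Cm / INR n ->
  (r * (a + b) + Cm) / INR n <= d ->
  minimal_in_circle a b f n r i0 j0.
Proof.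
  intros [Hm Hmin] Hnear Hfine l m (_ & _ & Hlm).
  assert (Hx : Rabs (gx a n l - gx a n i0) <= r * a / INR n)
    by exact (grid_dist_le a n l i0 r Ha Hn (Rle_trans _ _ _ (Rmax_l _ _) Hlm)).
  assert (Hy : Rabs (gy b n m - gy b n j0) <= r * b / INR n)
    by exact (grid_dist_le b n m j0 r Hb Hn (Rle_trans _ _ _ (Rmax_r _ _) Hlm)).
  assert (Hr : 0 <= r) by exact (Rle_trans _ _ _ (Rle_trans _ _ _ (Rabs_pos _) (Rmax_l _ _)) Hlm).
  assert (Hh : 0 < / INR n) by (apply Rinv_0_lt_compat, lt_0_INR; lia).
  pose proof (Rabs_pos (gx a n i0 - px)). pose proof (Rabs_pos (gy b n j0 - py)).
  pose proof (Rabs_triang (gx a n l - gx a n i0) (gx a n i0 - px)).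
  pose proof (Rabs_triang (gy b n m - gy b n j0) (gy b n j0 - py)).
  replace (gx a n l - gx a n i0 + (gx a n i0 - px)) with (gx a n l - px) in * by ring.
  replace (gy b n m - gy b n j0 + (gy b n j0 - py)) with (gy b n m - py) in * by ring.
  apply Hmin. unfold in_square, Rdiv in *.
  assert (0 <= r * b * / INR n) by (apply Rmult_le_pos; nra).
  assert (0 <= r * a * / INR n) by (apply Rmult_le_pos; nra).
  split; nra.
Qed.

Lemma grid_step_toward i j i0 j0 t rho :
  in_square px py (d / 2) (gx a n i) (gy b n j) ->
  (rho + 1) * (a + b) / INR n <= d / 2 -> 0 <= rho -> 0 <= t <= 1 ->
  t * Rmax (Rabs (INR i0 - INR i)) (Rabs (INR j0 - INR j)) <= rho ->
  exists k1 k2, Rabs (INR k1 - INR i) <= rho + 1 / 2 /\ Rabs (INR k2 - INR j) <= rho + 1 / 2 /\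
    in_square px py d (gx a n k1) (gy b n k2) /\
    Rabs (gx a n k1 - (gx a n i + t * (gx a n i0 - gx a n i))) <= a / 2 / INR n /\
    Rabs (gy b n k2 - (gy b n j + t * (gy b n j0 - gy b n j))) <= b / 2 / INR n.
Proof.
  intros [Hqx Hqy] Hfine Hrho Ht Hstep.
  assert (Hh : 0 < / INR n) by (apply Rinv_0_lt_compat, lt_0_INR; lia).
  destruct (grid_round_toward a n i i0 t Ha Hn Ht) as [k1 [He1 Hk1]].
  destruct (grid_round_toward b n j j0 t Hb Hn Ht) as [k2 [He2 Hk2]].
  assert (Hi : Rabs (INR k1 - INR i) <= rho + 1 / 2).
  { enough (t * Rabs (INR i0 - INR i) <= rho) by lra.
    eapply Rle_trans; [|exact Hstep]. apply Rmult_le_compat_l; [lra | apply Rmax_l]. }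
  assert (Hj : Rabs (INR k2 - INR j) <= rho + 1 / 2).
  { enough (t * Rabs (INR j0 - INR j) <= rho) by lra.
    eapply Rle_trans; [|exact Hstep]. apply Rmult_le_compat_l; [lra | apply Rmax_r]. }
  exists k1, k2. repeat split; [assumption | assumption | | | assumption | exact He2].
  - pose proof (grid_dist_le a n k1 i _ Ha Hn Hi).
    pose proof (Rabs_triang (gx a n k1 - gx a n i) (gx a n i - px)).
    replace (gx a n k1 - gx a n i + (gx a n i - px)) with (gx a n k1 - px) in * by ring.
    assert ((rho + 1 / 2) * a / INR n <= (rho + 1) * (a + b) / INR n)
      by (unfold Rdiv; apply Rmult_le_compat_r; nra).
    lra.
  - pose proof (grid_dist_le b n k2 j _ Hb Hn Hj : Rabs (gy b n k2 - gy b n j) <= _).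
    pose proof (Rabs_triang (gy b n k2 - gy b n j) (gy b n j - py)).
    replace (gy b n k2 - gy b n j + (gy b n j - py)) with (gy b n k2 - py) in * by ring.
    assert ((rho + 1 / 2) * b / INR n <= (rho + 1) * (a + b) / INR n)
      by (unfold Rdiv; apply Rmult_le_compat_r; nra).
    lra.
Qed.

Lemma grid_dist1_le_of_near i j i0 j0 Cm :
  Rabs (gx a n i0 - px) + Rabs (gy b n j0 - py) <= Cm / INR n ->
  Rabs (gx a n i - px) + Rabs (gy b n j - py)
  <= (Rmax (Rabs (INR i0 - INR i)) (Rabs (INR j0 - INR j)) * (a + b) + Cm) / INR n.
Proof.
  intros Hnear.
  set (Dd := Rmax (Rabs (INR i0 - INR i)) (Rabs (INR j0 - INR j))).
  assert (Hx : Rabs (gx a n i0 - gx a n i) <= Dd * a / INR n)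
    by exact (grid_dist_le a n i0 i _ Ha Hn (Rmax_l _ _)).
  assert (Hy : Rabs (gy b n j0 - gy b n j) <= Dd * b / INR n)
    by exact (grid_dist_le b n j0 j _ Hb Hn (Rmax_r _ _)).
  pose proof (Rabs_triang (gx a n i - gx a n i0) (gx a n i0 - px)).
  pose proof (Rabs_triang (gy b n j - gy b n j0) (gy b n j0 - py)).
  rewrite Rabs_minus_sym in Hx, Hy.
  replace (gx a n i - gx a n i0 + (gx a n i0 - px)) with (gx a n i - px) in * by ring.
  replace (gy b n j - gy b n j0 + (gy b n j0 - py)) with (gy b n j - py) in * by ring.
  unfold Rdiv in *. lra.
Qed.

Lemma grid_descent i j i0 j0 rho r Cm :
  window_grid_argmin a b f px py d n i0 j0 ->
  Rabs (gx a n i0 - px) + Rabs (gy b n j0 - py) <= Cm / INR n ->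
  in_square px py (d / 2) (gx a n i) (gy b n j) ->
  (rho + 1) * (a + b) / INR n <= d / 2 ->
  f (gx a n i0) (gy b n j0) < f (gx a n i) (gy b n j) ->
  r < Rmax (Rabs (INR i0 - INR i)) (Rabs (INR j0 - INR j)) ->
  1 <= rho -> rho + 1 / 2 <= r -> 8 * M * rho <= mu * r -> 0 <= Cm ->
  M * (a + b) * (a + b) + M * (a + b) * Cm <= mu / 4 * rho * (Rmin a b * Rmin a b) ->
  exists k1 k2, in_grid_circle n r i j k1 k2 /\
    f (gx a n k1) (gy b n k2) < f (gx a n i) (gy b n j).
Proof.
  intros [Hm _] Hnear Hq Hfine Hlt Hfar Hrho Hr HrM HCm Hbudget.
  assert (Hmu := window_mu_pos _ _ _ _ _ _ _ _ _ Hw).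
  assert (HM := window_M_nonneg _ _ _ _ _ _ _ _ _ Hw _ _ Hm).
  assert (Hqw : in_square px py d (gx a n i) (gy b n j))
    by (destruct Hq as [Hqx Hqy]; pose proof (Rabs_pos (gx a n i - px)); split; lra).
  set (Dd := Rmax (Rabs (INR i0 - INR i)) (Rabs (INR j0 - INR j))) in *.
  (* step from q towards the grid minimizer by index distance rho *)
  set (t := rho / Dd).
  assert (HtDd : t * Dd = rho) by (unfold t; field; lra).
  destruct (descent_step_size mu M rho r Dd HM Hrho Hr HrM Hfar) as [Ht HtM]. fold t in Ht, HtM.
  destruct (grid_step_toward i j i0 j0 t rho Hq Hfine ltac:(lra) ltac:(lra) (Req_le _ _ HtDd))
    as (k1 & k2 & Hk1 & Hk2 & Hk & He1 & He2).
  destruct (window_grid_index_le k1 k2 Hk) as [Hk1n Hk2n].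
  exists k1, k2. split; [repeat split; try assumption; apply Rmax_lub; lra|].
  set (e1 := gx a n k1 - (gx a n i + t * (gx a n i0 - gx a n i))) in *.
  set (e2 := gy b n k2 - (gy b n j + t * (gy b n j0 - gy b n j))) in *.
  assert (Hdesc := window_descent _ _ _ _ _ _ _ _ _ Hw Hcrit _ _ _ _ t e1 e2 Hqw Hm).
  replace (gx a n i + t * (gx a n i0 - gx a n i) + e1) with (gx a n k1) in Hdesc
    by (unfold e1; ring).
  replace (gy b n j + t * (gy b n j0 - gy b n j) + e2) with (gy b n k2) in Hdesc
    by (unfold e2; ring).
  specialize (Hdesc Hk (proj1 Ht) HtM Hlt).
  assert (Hn0 : 0 < INR n) by (apply lt_0_INR; lia).
  assert (HE2 := sum_sq_le_of_abs_le e1 e2 _ _ He1 He2).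
  replace (a / 2 / INR n + b / 2 / INR n) with ((a + b) / INR n / 2) in HE2 by (field; lra).
  set (w1 := gx a n i0 - gx a n i) in *. set (w2 := gy b n j0 - gy b n j) in *.
  assert (HZ := grid_dist1_le_of_near i j i0 j0 Cm Hnear). fold Dd in HZ.
  unfold Rdiv in *. set (h := / INR n) in *.
  assert (Hh : 0 < h) by (now apply Rinv_0_lt_compat).
  assert (HtW : rho * (Rmin a b * Rmin a b) * (h * h) * Dd <= t * (w1 * w1 + w2 * w2)).
  { replace (rho * (Rmin a b * Rmin a b) * (h * h) * Dd)
      with (t * (Rmin a b * Rmin a b * (h * h) * (Dd * Dd))) by (rewrite <- HtDd; ring).
    apply Rmult_le_compat_l; [lra|].
    replace w1 with ((INR i0 - INR i) * a * h) by (unfold w1, h; rewrite gx_sub; reflexivity).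
    replace w2 with ((INR j0 - INR j) * b * h) by (unfold w2, h; rewrite gy_sub; reflexivity).
    apply sum_sq_ge_min_max; assumption. }
  assert (Hbound : - (mu / 4 * (t * (w1 * w1 + w2 * w2)))
      + M * (Rabs (gx a n i - px) + Rabs (gy b n j - py)) * (Rabs e1 + Rabs e2)
      + 2 * M * (e1 * e1 + e2 * e2) <= 0).
  { pose proof (Rabs_pos e1). pose proof (Rabs_pos e2).
    pose proof (Rabs_pos (gx a n i - px)). pose proof (Rabs_pos (gy b n j - py)).
    apply (descent_budget mu M (a + b) (Rmin a b) Cm rho Dd _ _ _ _ h); try assumption; lra. }
  lra.
Qed.

Lemma minimal_in_circle_eq_window_grid_argmin i j i0 j0 rho r Cm :
  nondegenerate a b f n ->
  window_grid_argmin a b f px py d n i0 j0 ->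
  Rabs (gx a n i0 - px) + Rabs (gy b n j0 - py) <= Cm / INR n ->
  (i <= n)%nat -> (j <= n)%nat -> in_square px py (d / 2) (gx a n i) (gy b n j) ->
  minimal_in_circle a b f n r i j ->
  (rho + 1) * (a + b) / INR n <= d / 2 ->
  1 <= rho -> rho + 1 / 2 <= r -> 8 * M * rho <= mu * r -> 0 <= Cm ->
  M * (a + b) * (a + b) + M * (a + b) * Cm <= mu / 4 * rho * (Rmin a b * Rmin a b) ->
  i = i0 /\ j = j0.
Proof.
  intros Hnd Hargmin Hnear Hi Hj Hq Hmin Hfine Hrho Hr HrM HCm Hbudget.
  destruct (classic ((i, j) = (i0, j0))) as [E|Hne]; [now inversion E|exfalso].
  destruct Hargmin as [Hm Hmmin].
  destruct (window_grid_index_le i0 j0 Hm) as [Hi0 Hj0].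
  assert (Hlt : f (gx a n i0) (gy b n j0) < f (gx a n i) (gy b n j)).
  { assert (f (gx a n i0) (gy b n j0) <= f (gx a n i) (gy b n j))
      by (apply Hmmin; destruct Hq as [Hqx Hqy]; pose proof (Rabs_pos (gx a n i - px));
          split; lra).
    assert (f (gx a n i) (gy b n j) <> f (gx a n i0) (gy b n j0)) by (apply Hnd; assumption).
    lra. }
  destruct (Rle_lt_dec (Rmax (Rabs (INR i0 - INR i)) (Rabs (INR j0 - INR j))) r) as [Hclose|Hfar].
  - assert (f (gx a n i) (gy b n j) <= f (gx a n i0) (gy b n j0))
      by (apply Hmin; repeat split; assumption).
    lra.
  - destruct (grid_descent i j i0 j0 rho r Cm (conj Hm Hmmin) Hnear Hq Hfine Hlt Hfar
                Hrho Hr HrM HCm Hbudget) as (k1 & k2 & Hk & Hfk).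
    specialize (Hmin k1 k2 Hk). lra.
Qed.

Lemma grid_exists_unique_minimal_in_circle rho r :
  let Cm := M * (a + b) * (a + b) / mu + 1 in
  0 < d -> nondegenerate a b f n ->
  (Cm + r * (a + b) + (rho + 1) * (a + b) + (a + b)) / INR n < d / 2 ->
  1 <= rho -> rho + 1 / 2 <= r -> 8 * M * rho <= mu * r ->
  M * (a + b) * (a + b) + M * (a + b) * Cm <= mu / 4 * rho * (Rmin a b * Rmin a b) ->
  exists i j : nat,
    ((i <= n)%nat /\ (j <= n)%nat /\
     (Rabs (gx a n i - px) < d / 2 /\ Rabs (gy b n j - py) < d / 2) /\
     minimal_in_circle a b f n r i j) /\
    forall i' j' : nat,
      (i' <= n)%nat /\ (j' <= n)%nat /\
      (Rabs (gx a n i' - px) < d / 2 /\ Rabs (gy b n j' - py) < d / 2) /\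
      minimal_in_circle a b f n r i' j' -> i' = i /\ j' = j.
Proof.
  intros Cm Hd Hnd Hfine Hrho Hr HrM Hbudget.
  assert (Hmu := window_mu_pos _ _ _ _ _ _ _ _ _ Hw).
  assert (HM : 0 <= M).
  { apply (window_M_nonneg _ _ _ _ _ _ _ _ _ Hw px py).
    unfold in_square. rewrite !Rminus_diag, Rabs_R0. lra. }
  assert (HCm : 1 <= Cm).
  { enough (0 <= M * (a + b) * (a + b) / mu) by (unfold Cm; lra).
    apply Rdiv_le_0_compat; [apply Rmult_le_pos|]; nra. }
  unfold Rdiv in *. set (h := / INR n) in *.
  assert (Hh : 0 < h) by (apply Rinv_0_lt_compat, lt_0_INR; lia).
  assert (0 <= Cm * h) by (apply Rmult_le_pos; lra).
  assert (0 <= r * (a + b) * h) by (apply Rmult_le_pos; [apply Rmult_le_pos|]; lra).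
  assert (0 <= (a + b) * h) by (apply Rmult_le_pos; lra).
  assert (0 <= rho * (a + b) * h) by (apply Rmult_le_pos; [apply Rmult_le_pos|]; lra).
  replace ((Cm + r * (a + b) + (rho + 1) * (a + b) + (a + b)) * h)
    with (Cm * h + r * (a + b) * h + rho * (a + b) * h + 2 * ((a + b) * h)) in Hfine by ring.
  assert (Hfine1 : (a + b) * h <= d) by lra.
  assert (Hfine2 : (r * (a + b) + Cm) * h <= d) by lra.
  assert (Hfine3 : (rho + 1) * (a + b) * h <= d / 2) by lra.
  destruct (window_grid_argmin_exists Hfine1) as (i0 & j0 & Hargmin).
  assert (Hnear := window_grid_argmin_near_center i0 j0 Hfine1 Hargmin).
  unfold Rdiv in Hnear. fold Cm h in Hnear.
  destruct (window_grid_index_le i0 j0 (proj1 Hargmin)) as [Hi0 Hj0].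
  exists i0, j0. split.
  - pose proof (Rabs_pos (gx a n i0 - px)). pose proof (Rabs_pos (gy b n j0 - py)).
    repeat split; [assumption | assumption | lra | lra |].
    apply (window_grid_argmin_minimal_in_circle i0 j0 r Cm); assumption.
  - intros i j (Hi & Hj & [Hqx Hqy] & Hmin).
    apply (minimal_in_circle_eq_window_grid_argmin i j i0 j0 rho r Cm); try assumption.
    + split; lra.
    + lra.
Qed.

End Grid.

Lemma descent_constants mu M A c Cm :
  0 < mu -> 0 <= M -> 0 < c -> 0 <= A -> 0 <= Cm ->
  exists rho r, 1 <= rho /\ rho + 1 / 2 <= r /\ 8 * M * rho <= mu * r /\
    M * A * A + M * A * Cm <= mu / 4 * rho * (c * c).
Proof.
  intros Hmu HM Hc HA HCm.
  assert (Hk : 0 < mu / 4 * (c * c)) by (apply Rmult_lt_0_compat; nra).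
  assert (HMA : 0 <= M * A * A + M * A * Cm)
    by (assert (0 <= M * A) by (apply Rmult_le_pos; lra); nra).
  set (rho := (M * A * A + M * A * Cm) / (mu / 4 * (c * c)) + 1).
  assert (Hrho : 1 <= rho).
  { enough (0 <= (M * A * A + M * A * Cm) / (mu / 4 * (c * c))) by (unfold rho; lra).
    apply Rdiv_le_0_compat; lra. }
  exists rho, (rho + 1 + 8 * M * rho / mu). repeat split.
  - exact Hrho.
  - assert (0 <= 8 * M * rho / mu) by (apply Rdiv_le_0_compat; nra). lra.
  - replace (mu * (rho + 1 + 8 * M * rho / mu)) with (mu * (rho + 1) + 8 * M * rho) by (field; lra).
    nra.
  - unfold rho.
    replace (mu / 4 * ((M * A * A + M * A * Cm) / (mu / 4 * (c * c)) + 1) * (c * c))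
      with (M * A * A + M * A * Cm + mu / 4 * (c * c)) by (field; lra).
    lra.
Qed.

Theorem theorem1 (a b : R) (f : R -> R -> R) (F : list bool -> R -> R -> R)
  (px py : R) :
  0 < a -> 0 < b ->
  C3_on_D_with a b f F ->
  inIntD a b px py ->
  local_min_on_D a b f px py ->
  hessian_pos_def F px py ->
  exists (U : R -> R -> Prop) (r : R),
    is_nbhd U px py /\ 0 < r /\
    exists N : nat, forall n : nat, (N <= n)%nat -> (1 <= n)%nat ->
      nondegenerate a b f n ->
      exists i j : nat,
        ((i <= n)%nat /\ (j <= n)%nat /\ U (gx a n i) (gy b n j) /\
          minimal_in_circle a b f n r i j) /\
        forall i' j' : nat,
          (i' <= n)%nat /\ (j' <= n)%nat /\ U (gx a n i') (gy b n j') /\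
          minimal_in_circle a b f n r i' j' -> i' = i /\ j' = j.
Proof.
  intros Ha Hb HF Hp Hmin Hpd.
  destruct (taylor_window_exists a b f F px py HF Hp Hpd) as (d & mu & M & Hd & Hw).
  assert (Hcrit := local_min_grad_zero a b f F px py HF Hp Hmin).
  assert (Hmu := window_mu_pos _ _ _ _ _ _ _ _ _ Hw).
  assert (HM : 0 <= M).
  { apply (window_M_nonneg _ _ _ _ _ _ _ _ _ Hw px py).
    unfold in_square. rewrite !Rminus_diag, Rabs_R0. lra. }
  set (Cm := M * (a + b) * (a + b) / mu + 1).
  assert (HCm : 0 <= Cm)
    by (unfold Cm; assert (0 <= M * (a + b) * (a + b) / mu)
          by (apply Rdiv_le_0_compat; [apply Rmult_le_pos|]; nra); lra).
  destruct (descent_constants mu M (a + b) (Rmin a b) Cm Hmu HM (Rmin_pos a b Ha Hb)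
              ltac:(lra) HCm) as (rho & r & Hrho & Hr & HrM & Hbudget).
  exists (fun x y => Rabs (x - px) < d / 2 /\ Rabs (y - py) < d / 2), r.
  split; [exists (d / 2); split; [lra | auto] | split; [lra|]].
  destruct (exists_nat_div_lt (Cm + r * (a + b) + (rho + 1) * (a + b) + (a + b)) (d / 2))
    as [N HN]; [lra|].
  exists N. intros n HNn Hn Hnd.
  apply (grid_exists_unique_minimal_in_circle a b f F px py d mu M n Ha Hb Hn Hw Hcrit rho r);
    try assumption.
  now apply HN.
Qed.
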